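(* For any instance of the data described in the context, $\hat{\mathcal R}_M\supseteq\hat{\mathcal A}_M$, where $\hat{\cdot}$ denotes projection onto the coordinates $(p^g,q^g)$.
   Context: Data: finite bus set $\mathcal B$, line set $\mathcal L$ (unordered pairs of distinct buses; variables indexed by ordered pairs $(i,j)$ with $\{i,j\}\in\mathcal L$ where stated), $\delta(i)$ the neighbors of $i$, generator set $\mathcal G\subseteq\mathcal B$, reals $G_{ij},B_{ij}$ (lines), $G_{ii},B_{ii}$ (buses), demands $p_i^d,q_i^d$, voltage bounds $0\le\underline V_i\le\overline V_i$, generator bounds $p_i^{\min}\le p_i^{\max}$, $q_i^{\min}\le q_i^{\max}$ ($i\in\mathcal G$). Variables $p_i^g,q_i^g$ for $i\in\mathcal G$, with $p_i^g=q_i^g=0$ for $i\notin\mathcal G$; ''generator bounds'' means $p_i^{\min}\le p_i^g\le p_i^{\max}$, $q_i^{\min}\le q_i^g\le q_i^{\max}$. McCormick envelope: for $x\in[\underline x,\overline x]$, $y\in[\underline y,\overline y]$, $M(w=xy)$ denotes $\max\{\underline yx+\underline xy-\underline x\underline y,\ \overline yx+\overline xy-\overline x\overline y\}\le w\le\min\{\underline yx+\overline xy-\overline x\underline y,\ \overline yx+\underline xy-\underline x\overline y\}$. $\mathcal R_M$: set of $(p^g,q^g,e,f,E,F,H)$ ($e_i,f_i,E_{ii},F_{ii}$ for buses; $E_{ij},F_{ij},H_{ij}$ for ordered line pairs) with $p_i^g-p_i^d=G_{ii}(E_{ii}+F_{ii})+\sum_{j\in\delta(i)}[G_{ij}(E_{ij}+F_{ij})-B_{ij}(H_{ij}-H_{ji})]$,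 $q_i^g-q_i^d=-B_{ii}(E_{ii}+F_{ii})+\sum_{j\in\delta(i)}[-B_{ij}(E_{ij}+F_{ij})-G_{ij}(H_{ij}-H_{ji})]$, $\underline V_i^2\le E_{ii}+F_{ii}\le\overline V_i^2$, $-\overline V_i\le e_i,f_i\le\overline V_i$, $M(E_{ij}=e_ie_j)$, $M(F_{ij}=f_if_j)$, $M(H_{ij}=e_if_j)$, $M(E_{ii}=e_i^2)$, $M(F_{ii}=f_i^2)$ (bounds $[-\overline V_i,\overline V_i]$ for $e_i,f_i$), $E_{ii},F_{ii}\ge0$, and generator bounds. $\mathcal A_M$: set of $(p^g,q^g,c,s,C,S,D)$ with $c_{ii}$ for buses, $c_{ij},s_{ij}$ for ordered line pairs, $C_{ij},S_{ij},D_{ij}$ per line, satisfying $p_i^g-p_i^d=G_{ii}c_{ii}+\sum_{j\in\delta(i)}(G_{ij}c_{ij}-B_{ij}s_{ij})$, $q_i^g-q_i^d=-B_{ii}c_{ii}+\sum_{j\in\delta(i)}(-B_{ij}c_{ij}-G_{ij}s_{ij})$, $\underline V_i^2\le c_{ii}\le\overline V_i^2$, $c_{ij}=c_{ji}$, $s_{ij}=-s_{ji}$, generator bounds, and per line $C_{ij}+S_{ij}=D_{ij}$, $-\overline V_i\overline V_j\le c_{ij},s_{ij}\le\overline V_i\overline V_j$, $M(C_{ij}=c_{ij}^2)$, $M(S_{ij}=s_{ij}^2)$ (bounds $[-\overline V_i\overline V_j,\overline V_i\overline V_j]$), $M(D_{ij}=c_{ii}c_{jj})$ (bounds $[\underline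 V_i^2,\overline V_i^2]$, $[\underline V_j^2,\overline V_j^2]$), $C_{ij},S_{ij}\ge0$. *)

From HB Require Import structures.
From mathcomp Require Import all_boot all_order all_algebra.
Set Implicit Arguments. Unset Strict Implicit. Unset Printing Implicit Defensive.
Import Order.TTheory GRing.Theory Num.Theory.
Local Open Scope ring_scope.

Definition McCormick {R : realFieldType} (xl xu yl yu : R) (x y w : R) : Prop :=
  Num.max (yl * x + xl * y - xl * yl) (yu * x + xu * y - xu * yu) <= w /\
  w <= Num.min (yl * x + xu * y - xu * yl) (yu * x + xl * y - xl * yu).

(* Buses are the finite type [B]; lines are given by a
   relation [line] (required symmetric and irreflexive, i.e. unordered pairs of
   distinct buses); delta(i) = [pred j | line i j].  Line quantities G_ij, B_ij
   are functions on ordered pairs (required symmetric, one value per line);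
   bus quantities G_ii, B_ii are [Gbus], [Bbus]. *)
Record opf_data (B : finType) (R : realFieldType) := OpfData {
  line : rel B;
  gen  : pred B;
  Gl : B -> B -> R;  Bl : B -> B -> R;
  Gbus : B -> R;     Bbus : B -> R;
  pd : B -> R;       qd : B -> R;
  Vlo : B -> R;      Vup : B -> R;
  pmin : B -> R; pmax : B -> R; qmin : B -> R; qmax : B -> R
}.

Definition opf_wf (B : finType) (R : realFieldType) (d : opf_data B R) : Prop :=
  (forall i j, line d i j = line d j i) /\
  (forall i, ~~ line d i i) /\
  (forall i j, line d i j -> Gl d i j = Gl d j i /\ Bl d i j = Bl d j i) /\
  (forall i, 0 <= Vlo d i <= Vup d i) /\
  (forall i, gen d i -> pmin d i <= pmax d i /\ qmin d i <= qmax d i).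

Definition gen_ok (B : finType) (R : realFieldType) (d : opf_data B R)
  (pg qg : B -> R) : Prop :=
  forall i, if gen d i then pmin d i <= pg i <= pmax d i /\ qmin d i <= qg i <= qmax d i
            else pg i = 0 /\ qg i = 0.

Definition RM_feasible (B : finType) (R : realFieldType) (d : opf_data B R)
  (pg qg : B -> R) (e f Ebus Fbus : B -> R) (E F H : B -> B -> R) : Prop :=
  gen_ok d pg qg /\
  (forall i, pg i - pd d i =
     Gbus d i * (Ebus i + Fbus i) +
     \sum_(j | line d i j) (Gl d i j * (E i j + F i j) - Bl d i j * (H i j - H j i))) /\
  (forall i, qg i - qd d i =
     - Bbus d i * (Ebus i + Fbus i) +
     \sum_(j | line d i j) (- Bl d i j * (E i j + F i j) - Gl d i j * (H i j - H j i))) /\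
  (forall i, Vlo d i ^+ 2 <= Ebus i + Fbus i <= Vup d i ^+ 2) /\
  (forall i, - Vup d i <= e i <= Vup d i /\ - Vup d i <= f i <= Vup d i) /\
  (forall i j, line d i j ->
     McCormick (- Vup d i) (Vup d i) (- Vup d j) (Vup d j) (e i) (e j) (E i j) /\
     McCormick (- Vup d i) (Vup d i) (- Vup d j) (Vup d j) (f i) (f j) (F i j) /\
     McCormick (- Vup d i) (Vup d i) (- Vup d j) (Vup d j) (e i) (f j) (H i j)) /\
  (forall i,
     McCormick (- Vup d i) (Vup d i) (- Vup d i) (Vup d i) (e i) (e i) (Ebus i) /\
     McCormick (- Vup d i) (Vup d i) (- Vup d i) (Vup d i) (f i) (f i) (Fbus i) /\
     0 <= Ebus i /\ 0 <= Fbus i).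

Definition RM_hat (B : finType) (R : realFieldType) (d : opf_data B R)
  (pg qg : B -> R) : Prop :=
  exists e f Ebus Fbus E F H, RM_feasible d pg qg e f Ebus Fbus E F H.

(* The relaxation A_M.  c_ii is [cbus]; c_ij, s_ij on ordered line pairs;
   the per-line variables C, S, D are functions on ordered pairs required
   symmetric on lines (one value per unordered line). *)
Definition AM_feasible (B : finType) (R : realFieldType) (d : opf_data B R)
  (pg qg : B -> R) (cbus : B -> R) (c s C S D : B -> B -> R) : Prop :=
  gen_ok d pg qg /\
  (forall i, pg i - pd d i =
     Gbus d i * cbus i + \sum_(j | line d i j) (Gl d i j * c i j - Bl d i j * s i j)) /\
  (forall i, qg i - qd d i =
     - Bbus d i * cbus i + \sum_(j | line d i j) (- Bl d i j * c i j - Gl d i j * s i j)) /\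
  (forall i, Vlo d i ^+ 2 <= cbus i <= Vup d i ^+ 2) /\
  (forall i j, line d i j ->
     c i j = c j i /\ s i j = - s j i /\
     C i j = C j i /\ S i j = S j i /\ D i j = D j i /\
     C i j + S i j = D i j /\
     - (Vup d i * Vup d j) <= c i j <= Vup d i * Vup d j /\
     - (Vup d i * Vup d j) <= s i j <= Vup d i * Vup d j /\
     McCormick (- (Vup d i * Vup d j)) (Vup d i * Vup d j)
               (- (Vup d i * Vup d j)) (Vup d i * Vup d j) (c i j) (c i j) (C i j) /\
     McCormick (- (Vup d i * Vup d j)) (Vup d i * Vup d j)
               (- (Vup d i * Vup d j)) (Vup d i * Vup d j) (s i j) (s i j) (S i j) /\
     McCormick (Vlo d i ^+ 2) (Vup d i ^+ 2) (Vlo d j ^+ 2) (Vup d j ^+ 2)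
               (cbus i) (cbus j) (D i j) /\
     0 <= C i j /\ 0 <= S i j).

Definition AM_hat (B : finType) (R : realFieldType) (d : opf_data B R)
  (pg qg : B -> R) : Prop :=
  exists cbus c s C S D, AM_feasible d pg qg cbus c s C S D.

From mathcomp Require Import all_boot all_order all_algebra.
From mathcomp Require Import lra.
Import Order.TTheory GRing.Theory Num.Theory.
Local Open Scope ring_scope.

(* Given a point of A_M, take e = f = 0 and split every product variable evenly:
   E_ii = F_ii = c_ii/2, E_ij = F_ij = c_ij/2 and H_ij = s_ij/2.  The balance
   equations of R_M only involve E + F and H_ij - H_ji, which become c and (by
   antisymmetry of s) s.  At e = f = 0 a McCormick envelope over a symmetric box
   [-a,a] x [-b,b] reduces to |w| <= a b, and these bounds are inherited from the
   bounds on c_ij, s_ij and c_ii. *)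

Section Halving.
Context {R : realFieldType}.

Lemma McCormick_sym_box_origin (a b w : R) :
  McCormick (- a) a (- b) b 0 0 w <-> - (a * b) <= w <= a * b.
Proof.
rewrite /McCormick !mulr0 !add0r !mulNr !mulrN !opprK ge_max le_min -!mulNr !mulNr.
by split=> [[/andP[-> _] /andP[-> _]] | /andP[-> ->]].
Qed.

Lemma half_in_sym_interval (m x : R) : - m <= x <= m -> - m <= x / 2 <= m.
Proof. by move=> /andP[? ?]; apply/andP; split; lra. Qed.

Lemma half_in_sqr_interval {lo up x : R} :
  0 <= lo <= up -> lo ^+ 2 <= x <= up ^+ 2 ->
  - (up * up) <= x / 2 <= up * up /\ 0 <= x / 2.
Proof.
move=> /andP[lo0 _] /andP[lox xup]; have x0 : 0 <= x by rewrite (le_trans _ lox) ?sqr_ge0.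
rewrite expr2 in xup; split; first by apply: half_in_sym_interval; apply/andP; split; lra.
lra.
Qed.

End Halving.

Theorem proposition1 (B : finType) (R : realFieldType) (d : opf_data B R) :
  opf_wf d -> forall pg qg : B -> R, AM_hat d pg qg -> RM_hat d pg qg.
Proof.
move=> [_ [_ [_ [HV _]]]] pg qg [cbus [c [s [C [S [D]]]]]] [Hg [Hp [Hq [Hc Hl]]]].
exists (fun _ => 0), (fun _ => 0), (fun i => cbus i / 2), (fun i => cbus i / 2),
  (fun i j => c i j / 2), (fun i j => c i j / 2), (fun i j => s i j / 2).
have halves (x : R) : x / 2 + x / 2 = x by lra.
have flow i j : line d i j -> c i j / 2 + c i j / 2 = c i j /\ s i j / 2 - s j i / 2 = s i j.
  by move=> /Hl[_ [sji _]]; rewrite halves sji; split=> //; lra.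
split; first exact: Hg.
split.
  move=> i; rewrite Hp halves; congr (_ + _); by apply: eq_bigr => j /flow[-> ->].
split.
  move=> i; rewrite Hq halves; congr (_ + _); by apply: eq_bigr => j /flow[-> ->].
split; first by move=> i; rewrite halves.
split; first by move=> i; have := HV i; lra.
split.
  move=> i j /Hl[_ [_ [_ [_ [_ [_ [hc [hs _]]]]]]]].
  by split; [|split]; apply/McCormick_sym_box_origin/half_in_sym_interval.
move=> i; have [hbox h0] := half_in_sqr_interval (HV i) (Hc i).
by move/McCormick_sym_box_origin: hbox => mc; split; [|split; [|split]].
Qed.
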